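(* Let $Q\in\mathbb{R}^{n\times n}$ be symmetric positive definite with $Q_{i,i}=1$ for all $i$, whose support graph is a connected tree, and let $c,\lambda\in\mathbb{R}^n$ with $\lambda_i>0$. Then for every node $u$ and every $\alpha\in\mathbb{R}$, $$f_u(\alpha)=\tfrac12 Q_{u,u}\alpha^2+c_u\alpha+\lambda_u\mathbb{1}_\alpha-\sum_{v\in\mathrm{par}(u)}f_v^*(-Q_{u,v}\alpha),$$ where $f_v^*(\beta)=\sup_{\xi\in\mathbb{R}}\{\beta\xi-f_v(\xi)\}$ (with the empty sum equal to $0$ when $u$ is a leaf).
   Context: The support graph of $Q$ is the undirected graph on $\{1,\dots,n\}$ with edge $\{i,j\}$ ($i\ne j$) iff $Q_{i,j}\ne0$. The tree is rooted at $n$ with topological labeling: each non-root node $u$ has a unique neighbor $\mathrm{child}(u)$ on its path to the root, with $u<\mathrm{child}(u)$; $\mathrm{par}(u)=\{v:\mathrm{child}(v)=u\}$. $\mathrm{supp}_u(Q)$ is the subtree of $u$ and all nodes whose path to the root passes through $u$; $n_u$ is its size; $Q_{[u]},c_{[u]},\lambda_{[u]}$ are the restrictions to its nodes. $\mathbb{1}_\alpha=0$ if $\alpha=0$ and $1$ otherwise. The parametric cost is $f_u(\alpha)=\min\{\tfrac12x^\top Q_{[u]}x+c_{[u]}^\top x+\lambda_{[u]}^\top z : x\in\mathbb{R}^{n_u}, z\in\{0,1\}^{n_u}, x_i(1-z_i)=0\ \forall i, x_u=\alpha\}$, where $x_u$ is the coordinate corresponding to node $u$. *)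

From HB Require Import structures.
From mathcomp Require Import all_boot all_order all_algebra.
From mathcomp Require Import boolp classical_sets reals constructive_ereal ereal.
Set Implicit Arguments. Unset Strict Implicit. Unset Printing Implicit Defensive.
Import Order.TTheory GRing.Theory Num.Theory.
Local Open Scope ring_scope.

Section Defs.
Variables (R : realType) (m : nat).
(* nodes are 'I_m.+1 = {0,...,m}; the paper's nodes 1..n correspond to 0..n-1,
   with n = m.+1; the root (the paper's node n) is ord_max. *)
Notation n := m.+1.
Implicit Types (Q : 'M[R]_n) (c lam : 'I_n -> R).

Definition root : 'I_n := ord_max.

Definition adj Q : rel 'I_n := fun i j => (i != j) && (Q i j != 0).

Definition is_tree Q : Prop :=
  (forall i j, connect (adj Q) i j) /\
  (forall s : seq 'I_n, 3 <= size s -> uniq s -> ~~ cycle (adj Q) s)%N.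

Definition next_to_root Q (u v : 'I_n) : Prop :=
  exists p : seq 'I_n,
    [/\ path (adj Q) u (v :: p), last v p = root & uniq (u :: v :: p)].

Definition topo_labeling Q : Prop :=
  forall u v : 'I_n, u != root -> next_to_root Q u v -> (u < v)%N.

Definition par Q (u : 'I_n) : {set 'I_n} :=
  [set v | (v != root) && `[< next_to_root Q v u >]].

Definition in_subtree Q (u w : 'I_n) : bool :=
  `[< exists p : seq 'I_n,
        [/\ path (adj Q) w p, last w p = root, uniq (w :: p) & u \in w :: p] >].

Definition ind (a : R) : R := (a != 0)%:R.

Definition fcost Q c lam (u : 'I_n) (a : R) : \bar R :=
  ereal_inf [set y : \bar R | exists (x : 'I_n -> R) (z : 'I_n -> bool),
    [/\ forall i, in_subtree Q u i -> x i * (1 - (z i)%:R) = 0,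
        x u = a &
        y = (2^-1 * (\sum_(i | in_subtree Q u i) \sum_(j | in_subtree Q u j)
                       x i * Q i j * x j)
             + \sum_(i | in_subtree Q u i) c i * x i
             + \sum_(i | in_subtree Q u i) lam i * (z i)%:R)%:E]].

Definition fconj Q c lam (v : 'I_n) (b : R) : \bar R :=
  ereal_sup [set y : \bar R | exists xi : R,
    y = ((b * xi)%:E - fcost Q c lam v xi)%E].

Definition posdef Q : Prop :=
  forall x : 'cV[R]_n, x != 0 -> 0 < (x^T *m Q *m x) 0 0.

End Defs.

From Pilot Require Import Defs.
From HB Require Import structures.
From mathcomp Require Import all_boot all_order all_algebra.
From mathcomp Require Import boolp classical_sets reals constructive_ereal ereal.
From mathcomp Require Import zify ring lra.
Import Order.TTheory GRing.Theory Num.Theory.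
Local Open Scope ring_scope.
Set Implicit Arguments. Unset Strict Implicit. Unset Printing Implicit Defensive.

(* The subtree of u is the disjoint union of {u} and of the subtrees of the
   nodes v in par(u), and since the support graph is a tree the only entries of
   Q linking these pieces are the Q_{u,v}.  So the cost on the subtree of u
   splits as q_u(x_u, z_u) + sum_v (Q_{u,v} x_u x_v + cost_v), the feasible
   choices on the different subtrees are independent, and minimizing subtree by
   subtree with x_u = alpha fixed turns the v-th inner minimum into
   -f_v^*(-Q_{u,v} alpha), while lambda_u > 0 makes z_u = 1_alpha optimal. *)

Section ExtendedRealBounds.
Variable R : realType.
Local Open Scope ereal_scope.

Lemma lee_swapBr (r : R) (x y : \bar R) : (x <= r%:E - y) = (y <= r%:E - x).
Proof. by rewrite !lee_suber_addl // addeC. Qed.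

Lemma lee_swapBl (r : R) (x y : \bar R) : (r%:E - x <= y) = (r%:E - y <= x).
Proof.
case: x y => [x| |] [y| |] //=; rewrite ?leey ?leNye //.
by rewrite !lee_fin !lerBlDr addrC.
Qed.

Lemma ereal_sup_sum_le (I : eqType) (X : Type) (x0 : X) (W : I -> set X)
    (h : I -> X -> R) (s : seq I) (K : \bar R) :
  uniq s -> (forall v, v \in s -> exists y, W v y) ->
  (forall w : I -> X, (forall v, v \in s -> W v (w v)) ->
     \sum_(v <- s) (h v (w v))%:E <= K) ->
  \sum_(v <- s) ereal_sup [set (h v y)%:E | y in W v] <= K.
Proof.
elim: s K => [|v s IH] K; first by move=> _ _ /(_ (fun=> x0)); rewrite !big_nil; apply.
rewrite cons_uniq big_cons => /andP [vs Us] W_ne H.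
have step y : W v y ->
    (h v y)%:E + \sum_(v' <- s) ereal_sup [set (h v' y')%:E | y' in W v'] <= K.
  move=> Wy; rewrite -leeBrDl //; apply: IH => // [v' v's|w Hw].
    by apply: W_ne; rewrite in_cons v's orbT.
  pose w' v' := if v' == v then y else w v'.
  have Ew' : \sum_(v' <- s) (h v' (w' v'))%:E = \sum_(v' <- s) (h v' (w v'))%:E.
    apply: eq_big_seq => v' v's; rewrite /w'.
    by case: eqP => // Ev; move: vs; rewrite -Ev v's.
  have w'v : w' v = y by rewrite /w' eqxx.
  rewrite leeBrDl //; move: (H w'); rewrite big_cons w'v Ew'; apply => v'.
  by rewrite in_cons /w'; case: eqP => [-> _ //|_ /= /Hw].
move: step; case: (\sum_(v' <- s) _) => [t| |] step.
- rewrite -leeBrDr //; apply/ereal_supP => _ [y Wy <-].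
  by rewrite leeBrDr // step.
- have [y Wy] := W_ne v (mem_head _ _).
  by move: (step y Wy) => /=; rewrite leye_eq => /eqP ->; rewrite leey.
- by rewrite addeNy leNye.
Qed.

End ExtendedRealBounds.

Section AcyclicPaths.
Variables (T : eqType) (e : rel T).
Hypothesis e_sym : symmetric e.
Hypothesis e_acyclic : forall s : seq T, (3 <= size s)%N -> uniq s -> ~~ cycle e s.

Lemma no_simple_fork a x y p q : x != y ->
  path e a (x :: p) -> path e a (y :: q) -> last x p = last y q ->
  uniq (a :: x :: p) -> uniq (a :: y :: q) -> False.
Proof.
move=> xy; move Es : (x :: p) => s; move Et : (y :: q) => t Ps Pt Elast Us Ut.
have : has (mem t) s.
  apply/hasP; exists (last x p); first by rewrite -Es mem_last.
  by rewrite inE Elast -Et mem_last.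
(* The first vertex c of x :: p on y :: q closes the simple cycle a, p1, c, rev q1. *)
move=> hs; case/split_find: hs Es Ps Us => c p1 p2 ct p1t Es Ps Us.
case/splitPr: ct p1t Et Pt Ut => q1 q2 p1t Et Pt Ut.
have p1q1 z : z \in p1 -> z \notin q1.
  by move=> zp1; apply: contra (hasPn p1t z zp1); rewrite inE mem_cat => ->.
have sizeL : (3 <= size (a :: rcons p1 c ++ rev q1))%N.
  rewrite /= size_cat size_rcons size_rev.
  case: p1 q1 Es Et {p1t p1q1 Ps Us Pt Ut} => [|? ?] [|? ?] //= [Ex _] [Ey _].
  by move: xy; rewrite Ex Ey eqxx.
have uniqL : uniq (a :: rcons p1 c ++ rev q1).
  move: Us Ut; rewrite !cons_uniq !cat_uniq rev_uniq !mem_cat mem_rev.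
  rewrite rcons_uniq !mem_rcons !in_cons !negb_or.
  move=> /and4P [/andP [/andP [ac ap1] _] /andP [cp1 up1] _ _].
  move=> /and4P [/and3P [aq1 _ _] uq1 /andP [cq1 _] _].
  rewrite ac ap1 aq1 cp1 up1 uq1 /= andbT has_rev; apply/hasPn => z zq1.
  rewrite mem_rcons inE negb_or (contraL (p1q1 z) zq1) andbT.
  by apply: contraNneq cq1 => <-.
apply: (negP (e_acyclic sizeL uniqL)).
rewrite /= rcons_cat cat_path; move: Ps; rewrite cat_path => /andP [-> _] /=.
rewrite last_rcons -rev_cons -(belast_rcons a q1 c).
rewrite -[X in path e X](last_rcons a q1 c) rev_path (eq_path (e' := e)) => [|? ?].
  by move: Pt; rewrite -cat_rcons cat_path => /andP [].
exact: e_sym.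
Qed.

Lemma simple_path_unique a p q : path e a p -> path e a q -> last a p = last a q ->
  uniq (a :: p) -> uniq (a :: q) -> p = q.
Proof.
elim: p a q => [|x p IH] a [|y q] //=.
- by move=> _ _ Elast _ /andP [/negP []]; rewrite Elast mem_last.
- by move=> _ _ Elast /andP [/negP []]; rewrite -Elast mem_last.
move=> /andP [ax Pp] /andP [ay Pq] Elast Up Uq.
have [Exy|xy] := eqVneq x y; last first.
  by case: (no_simple_fork xy (a := a) (p := p) (q := q)); rewrite /= ?ax ?ay.
case/andP: Up => _ Up; case/andP: Uq => _ Uq.
by subst y; congr (_ :: _); apply: (IH x).
Qed.

End AcyclicPaths.

Section RootPaths.
Variables (T : finType) (e : rel T) (r : T).
Hypothesis e_sym : symmetric e.
Hypothesis e_acyclic : forall s : seq T, (3 <= size s)%N -> uniq s -> ~~ cycle e s.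
Hypothesis e_connected : forall i j, connect e i j.

Definition is_root_path w p := [&& path e w p, last w p == r & uniq (w :: p)].

Lemma exists_root_path w : exists p, is_root_path w p.
Proof.
have /connectP [p Pp El] := e_connected w r.
move: El; case/shortenP: Pp => p' Pp' Up' _ El.
by exists p'; rewrite /is_root_path Pp' Up' -El eqxx.
Qed.

Definition root_path w := xchoose (exists_root_path w).
Definition to_root w := w :: root_path w.

Lemma root_pathP w : is_root_path w (root_path w).
Proof. exact: xchooseP. Qed.

Lemma root_path_unique w p : is_root_path w p -> p = root_path w.
Proof.
case/and3P: (root_pathP w) => P2 /eqP L2 U2 /and3P [P1 /eqP L1 U1].
by apply: (simple_path_unique e_sym e_acyclic (a := w)) => //; rewrite L1 L2.
Qed.

Lemma uniq_to_root w : uniq (to_root w).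
Proof. by case/and3P: (root_pathP w). Qed.

Lemma root_path_root : root_path r = [::].
Proof.
case/and3P: (root_pathP r); case: (root_path r) => //= y p _ /eqP Elast.
by rewrite -Elast mem_last.
Qed.

Lemma root_path_suffix w pre v post :
  to_root w = pre ++ v :: post -> root_path v = post.
Proof.
move=> Ew; symmetry; apply: root_path_unique.
case/and3P: (root_pathP w) => Pw /eqP Lw Uw; apply/and3P; split.
- by move: Pw; rewrite -[path e w _]/(sorted e (to_root w)) Ew sorted_cat_cons => /andP [].
- by rewrite -Lw -[last w _]/(last w (to_root w)) Ew last_cat.
- by move: Uw; rewrite -[uniq _]/(uniq (to_root w)) Ew cat_uniq => /and3P [].
Qed.

Lemma to_root_suffix i v : v \in to_root i -> exists pre, to_root i = pre ++ to_root v.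
Proof.
move Ei : (to_root i) => s vs; case/splitPr: vs Ei => pre post Ei.
by exists pre; rewrite /to_root (root_path_suffix Ei).
Qed.

Definition next_to_rootb v u := root_path v == to_root u.

Lemma to_root_prev u i : u \in to_root i -> i != u ->
  exists2 v, next_to_rootb v u & v \in to_root i.
Proof.
case/to_root_suffix => pre; case/lastP: pre => [|pre v] Ei iu.
  by move: iu; case: Ei => ->; rewrite eqxx.
exists v; last by rewrite Ei mem_cat mem_rcons mem_head.
by apply/eqP; apply: (root_path_suffix (w := i) (pre := pre)); rewrite Ei cat_rcons.
Qed.

Section NextToRoot.
Variables (u v : T).
Hypothesis vu : next_to_rootb v u.

Lemma to_root_next i : v \in to_root i -> u \in to_root i.
Proof.
case/to_root_suffix => pre ->; move/eqP: vu => Ev.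
by rewrite mem_cat /to_root Ev !inE eqxx !orbT.
Qed.

Lemma next_notin_to_root : v \notin to_root u.
Proof.
apply/negP => /to_root_suffix [pre]; rewrite {2}/to_root (eqP vu).
by move/(congr1 size); rewrite size_cat /=; lia.
Qed.

Lemma to_root_next_inj v' i : next_to_rootb v' u ->
  v \in to_root i -> v' \in to_root i -> v = v'.
Proof.
move=> /eqP Ev' /to_root_suffix [pre E] /to_root_suffix [pre'].
rewrite E /to_root (eqP vu) Ev' => E'.
have Esize : size pre = size pre'.
  by move/(congr1 size): E'; rewrite !size_cat /= => /addIn.
by move/eqP: E'; rewrite eqseq_cat // => /andP [_ /eqP [->]].
Qed.

Lemma edge_next_to_root i j : v \in to_root i -> u \in to_root j ->
  v \notin to_root j -> e i j -> i = v /\ j = u.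
Proof.
move=> vi uj vj eij.
have [ji|jNi] := boolP (j \in to_root i); last first.
  have Ej : to_root i = root_path j.
    apply: root_path_unique; case/and3P: (root_pathP i) => Pi Li Ui.
    by rewrite /is_root_path /= e_sym eij Pi Li jNi.
  by move: vj; rewrite /to_root -Ej inE vi orbT.
have [[|k pre] Ei] := to_root_suffix ji.
  by move: vi; rewrite Ei (negbTE vj).
have Erp : root_path i = pre ++ to_root j by case: Ei.
have Ei' : root_path i = to_root j.
  symmetry; apply: root_path_unique; case/and3P: (root_pathP j) => Pj Lj _.
  apply/and3P; split; [by rewrite /= eij | by [] | rewrite cons_uniq uniq_to_root andbT].
  move: (uniq_to_root i); rewrite {1}/to_root Erp cons_uniq mem_cat negb_or.
  by case/andP => /andP [_ ->].
have iv : i = v by move: vi; rewrite /to_root Ei' inE (negbTE vj) orbF => /eqP.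
by split => //; move/eqP: vu; rewrite -iv Ei' => -[].
Qed.

End NextToRoot.

End RootPaths.

Section SupportTree.
Variables (R : realType) (m : nat) (Q : 'M[R]_m.+1).
Hypotheses (Q_sym : Q^T = Q) (Q_tree : is_tree Q).
Local Notation n := m.+1.

Lemma Q_symE i j : Q i j = Q j i.
Proof. by rewrite -{1}Q_sym mxE. Qed.

Lemma adj_sym : symmetric (adj Q).
Proof. by move=> i j; rewrite /adj eq_sym Q_symE. Qed.

Local Notation rpath := (root_path (Defs.root m) Q_tree.1).
Local Notation path_to_root := (to_root (Defs.root m) Q_tree.1).
Local Notation root_step := (next_to_rootb (Defs.root m) Q_tree.1).

Lemma in_subtreeE u w : in_subtree Q u w = (u \in path_to_root w).
Proof.
apply/asboolP/idP => [[p [Pp Lp Up up]]|uw].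
  suff -> : path_to_root w = w :: p by [].
  rewrite /to_root -(@root_path_unique _ _ _ adj_sym Q_tree.2 Q_tree.1 w p) //.
  by rewrite /is_root_path Pp Lp Up eqxx.
exists (rpath w).
by case/and3P: (root_pathP (Defs.root m) Q_tree.1 w) => Pw /eqP Lw Uw.
Qed.

Lemma parE u v : (v \in par Q u) = root_step v u.
Proof.
rewrite inE /next_to_rootb; apply/andP/eqP => [[_ /asboolP [p [Pp Lp Up]]]|Ev].
  have Ev : u :: p = rpath v.
    by apply: (root_path_unique adj_sym Q_tree.2); apply/and3P; rewrite /= Lp.
  rewrite -Ev /to_root (@root_path_suffix _ _ _ adj_sym Q_tree.2 Q_tree.1 v [:: v] u p) //.
  by rewrite /to_root -Ev.
split; first by apply/eqP => vr; move: Ev; rewrite vr root_path_root.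
apply/asboolP; exists (rpath u).
by case/and3P: (root_pathP (Defs.root m) Q_tree.1 v); rewrite Ev => Pv /eqP Lv Uv.
Qed.

Lemma in_subtree_refl u : in_subtree Q u u.
Proof. by rewrite in_subtreeE mem_head. Qed.

Lemma in_subtree_par u v i : v \in par Q u -> in_subtree Q v i -> in_subtree Q u i.
Proof. by rewrite parE !in_subtreeE => vu; exact: (to_root_next adj_sym Q_tree.2 vu). Qed.

Lemma in_subtree_parP u i : in_subtree Q u i -> i != u ->
  exists2 v, v \in par Q u & in_subtree Q v i.
Proof.
rewrite in_subtreeE => /(to_root_prev adj_sym Q_tree.2) /[apply] -[v vu vi].
by exists v; rewrite ?parE ?in_subtreeE.
Qed.

Lemma par_notin_subtree u v : v \in par Q u -> ~~ in_subtree Q v u.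
Proof. by rewrite parE in_subtreeE => vu; exact: (next_notin_to_root adj_sym Q_tree.2 vu). Qed.

Lemma in_subtree_par_inj u v v' i : v \in par Q u -> v' \in par Q u ->
  in_subtree Q v i -> in_subtree Q v' i -> v = v'.
Proof.
by rewrite !parE !in_subtreeE => vu v'u; exact: (to_root_next_inj adj_sym Q_tree.2 vu v'u).
Qed.

Lemma adj_subtree_par u v i j : v \in par Q u ->
  in_subtree Q v i -> in_subtree Q u j -> ~~ in_subtree Q v j -> adj Q i j ->
  i = v /\ j = u.
Proof. by rewrite parE !in_subtreeE => vu; exact: (edge_next_to_root adj_sym Q_tree.2 vu). Qed.

Lemma par_subtree_Q_eq0 u v j : v \in par Q u -> in_subtree Q v j -> j != v ->
  Q j u = 0.
Proof.
move=> vu vj; apply: contraNeq => Qju.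
have ju : j != u by apply: contraNneq (par_notin_subtree vu) => <-.
have adj_ju : adj Q j u by rewrite /adj ju.
by have [-> _] := adj_subtree_par vu vj (in_subtree_refl u) (par_notin_subtree vu) adj_ju.
Qed.

Lemma par_subtrees_Q_eq0 u v v' i j : v \in par Q u -> v' \in par Q u -> v != v' ->
  in_subtree Q v i -> in_subtree Q v' j -> Q i j = 0.
Proof.
move=> vu v'u vv' vi v'j; apply/eqP/negPn/negP => Qij.
have vj : ~~ in_subtree Q v j.
  by apply: contra vv' => vj; rewrite (in_subtree_par_inj vu v'u vj v'j).
have ij : i != j by apply: contraNneq vj => <-.
have adj_ij : adj Q i j by rewrite /adj ij.
have [_ ju] := adj_subtree_par vu vi (in_subtree_par v'u v'j) vj adj_ij.
by case/negP: (par_notin_subtree v'u); rewrite -ju.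
Qed.

Lemma big_subtree (V : nmodType) u (F : 'I_n -> V) :
  \sum_(i | in_subtree Q u i) F i =
  F u + \sum_(v in par Q u) \sum_(i | in_subtree Q v i) F i.
Proof.
rewrite (bigD1 u) ?in_subtree_refl //=; congr (_ + _).
pose S v := if v \in par Q u then finset (in_subtree Q v) else finset.set0.
rewrite (eq_bigl (mem (\bigcup_v S v))) => [|i]; last first.
  apply/andP/bigcupP => [[ui iu]|[v _]]; rewrite /S.
    by have [v vu vi] := in_subtree_parP ui iu; exists v; rewrite // vu finset.in_set.
  case: ifP => vu; rewrite ?finset.in_set ?finset.in_set0 // => vi.
  split; first exact: in_subtree_par vu vi.
  by apply: contraNneq (par_notin_subtree vu) => <-.
rewrite partition_disjoint_bigcup => [|v v' vv']; last first.
  rewrite /S; case: ifP => vu; last by apply/pred0P => i; rewrite /= finset.in_set0.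
  case: ifP => v'u; last by apply/pred0P => i; rewrite /= finset.in_set0 andbF.
  apply/pred0P => i /=; rewrite !finset.in_set; apply/andP => -[vi v'i].
  by move: vv'; rewrite (in_subtree_par_inj vu v'u vi v'i) eqxx.
rewrite [RHS]big_mkcond; apply: eq_bigr => v _; rewrite /S.
by case: ifP => _; [apply: eq_bigl => i; rewrite finset.in_set | rewrite big_set0].
Qed.

Lemma quad_subtree_rec u (x : 'I_n -> R) :
  \sum_(i | in_subtree Q u i) \sum_(j | in_subtree Q u j) x i * Q i j * x j =
  x u * Q u u * x u + \sum_(v in par Q u) (2 * (x u * Q u v * x v)
    + \sum_(i | in_subtree Q v i) \sum_(j | in_subtree Q v j) x i * Q i j * x j).
Proof.
pose F i j := x i * Q i j * x j.
have row_u : \sum_(j | in_subtree Q u j) F u j = F u u + \sum_(v in par Q u) F u v.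
  rewrite big_subtree; congr (_ + _); apply: eq_bigr => v vu.
  rewrite (bigD1 v) ?in_subtree_refl //= big1 ?addr0 // => j /andP [vj jv].
  by rewrite /F Q_symE (par_subtree_Q_eq0 vu vj jv) mulr0 mul0r.
have col_u v : v \in par Q u -> \sum_(i | in_subtree Q v i) F i u = F v u.
  move=> vu; rewrite (bigD1 v) ?in_subtree_refl //= big1 ?addr0 // => i /andP [vi iv].
  by rewrite /F (par_subtree_Q_eq0 vu vi iv) mulr0 mul0r.
have row_i v i : v \in par Q u -> in_subtree Q v i ->
    \sum_(j | in_subtree Q u j) F i j = F i u + \sum_(j | in_subtree Q v j) F i j.
  move=> vu vi; rewrite big_subtree (bigD1 v) //= [X in _ + (_ + X)]big1 ?addr0 //.
  move=> v' /andP [v'u v'v]; rewrite big1 // => j v'j.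
  by rewrite /F (par_subtrees_Q_eq0 vu v'u _ vi v'j) ?mulr0 ?mul0r // eq_sym.
rewrite big_subtree row_u -addrA; congr (_ + _).
rewrite -big_split; apply: eq_bigr => v vu.
by rewrite (eq_bigr _ (fun i => row_i v i vu)) big_split /= col_u // /F (Q_symE v u); ring.
Qed.

Section SubtreeCost.
Variables c lam : 'I_n -> R.

Definition feasible u (x : 'I_n -> R) (z : 'I_n -> bool) :=
  forall i, in_subtree Q u i -> x i * (1 - (z i)%:R) = 0.

Definition subtree_cost u (x : 'I_n -> R) (z : 'I_n -> bool) : R :=
  2^-1 * (\sum_(i | in_subtree Q u i) \sum_(j | in_subtree Q u j) x i * Q i j * x j)
  + \sum_(i | in_subtree Q u i) c i * x i
  + \sum_(i | in_subtree Q u i) lam i * (z i)%:R.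

Lemma subtree_cost_rec u x z : subtree_cost u x z =
  2^-1 * Q u u * x u ^+ 2 + c u * x u + lam u * (z u)%:R
  + \sum_(v in par Q u) (Q u v * x u * x v + subtree_cost v x z).
Proof.
have -> : \sum_(v in par Q u) (Q u v * x u * x v + subtree_cost v x z) =
    2^-1 * \sum_(v in par Q u) (2 * (x u * Q u v * x v)
      + \sum_(i | in_subtree Q v i) \sum_(j | in_subtree Q v j) x i * Q i j * x j)
    + \sum_(v in par Q u) \sum_(i | in_subtree Q v i) c i * x i
    + \sum_(v in par Q u) \sum_(i | in_subtree Q v i) lam i * (z i)%:R.
  rewrite mulr_sumr -!big_split /=; apply: eq_bigr => v _.
  by rewrite /subtree_cost; field.
by rewrite {1}/subtree_cost quad_subtree_rec !(big_subtree u); ring.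
Qed.

Lemma subtree_cost_ext v x z x' z' :
  (forall i, in_subtree Q v i -> x i = x' i /\ z i = z' i) ->
  subtree_cost v x z = subtree_cost v x' z'.
Proof.
move=> E; rewrite /subtree_cost; congr (_ * _ + _ + _).
- by apply: eq_bigr => i vi; apply: eq_bigr => j vj; rewrite (E i vi).1 (E j vj).1.
- by apply: eq_bigr => i vi; rewrite (E i vi).1.
- by apply: eq_bigr => i vi; rewrite (E i vi).2.
Qed.

Lemma feasible_par u v x z : v \in par Q u -> feasible u x z -> feasible v x z.
Proof. by move=> vu fx i vi; apply/fx/(in_subtree_par vu vi). Qed.

Lemma feasible_glue u a (w : 'I_n -> ('I_n -> R) * ('I_n -> bool)) :
  (forall v, v \in par Q u -> feasible v (w v).1 (w v).2) ->
  exists x z, [/\ feasible u x z, x u = a, z u = (a != 0) &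
    forall v i, v \in par Q u -> in_subtree Q v i ->
      x i = (w v).1 i /\ z i = (w v).2 i].
Proof.
move=> fw.
pose owner i := [pick v in par Q u | in_subtree Q v i].
pose x i := if i == u then a else if owner i is Some v then (w v).1 i else 0.
pose z i := if i == u then a != 0 else if owner i is Some v then (w v).2 i else false.
have xz v i : v \in par Q u -> in_subtree Q v i -> x i = (w v).1 i /\ z i = (w v).2 i.
  move=> vu vi; have iu : i != u by apply: contraNneq (par_notin_subtree vu) => <-.
  rewrite /x /z (negbTE iu) /owner; case: pickP => [v' /andP [v'u v'i]|/(_ v)].
    by rewrite (in_subtree_par_inj v'u vu v'i vi).
  by rewrite vu vi.
exists x, z; split; [|by rewrite /x eqxx|by rewrite /z eqxx|exact: xz].
move=> i ui; have [->|iu] := eqVneq i u.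
  by rewrite /x /z eqxx; case: eqVneq => [->|_]; rewrite ?mul0r ?subrr ?mulr0.
have [v vu vi] := in_subtree_parP ui iu.
by have [-> ->] := xz v i vu vi; apply: fw.
Qed.

Lemma fcost_le_cost v x z : feasible v x z ->
  (fcost Q c lam v (x v) <= (subtree_cost v x z)%:E)%E.
Proof.
by move=> fx; apply: ge_ereal_inf; exists (subtree_cost v x z)%:E => //; exists x, z.
Qed.

Lemma le_fcost u a (y : \bar R) :
  (forall x z, feasible u x z -> x u = a -> y <= (subtree_cost u x z)%:E)%E ->
  (y <= fcost Q c lam u a)%E.
Proof. by move=> H; apply/ereal_infP => _ [x [z [fx xu ->]]]; apply: H. Qed.

Definition cost_gain v b (w : ('I_n -> R) * ('I_n -> bool)) :=
  b * w.1 v - subtree_cost v w.1 w.2.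

Lemma fconj_feasible v b : fconj Q c lam v b =
  ereal_sup [set (cost_gain v b w)%:E | w in [set w | feasible v w.1 w.2]].
Proof.
apply/eqP; rewrite eq_le; apply/andP; split.
  apply/ereal_supP => _ [xi ->]; rewrite lee_swapBl; apply: le_fcost => x z fx <-.
  by rewrite lee_swapBl; apply: ereal_sup_ubound; exists (x, z).
apply/ereal_supP => _ [w fw <-]; apply: le_ereal_sup_tmp.
exists ((b * w.1 v)%:E - fcost Q c lam v (w.1 v))%E; first by exists (w.1 v).
by rewrite /cost_gain EFinB leeB // fcost_le_cost.
Qed.

Section Recursion.
Variables (u : 'I_n) (a : R).
Local Notation r := (2^-1 * Q u u * a ^+ 2 + c u * a + lam u * ind a).

Lemma fcost_le_rec :
  (fcost Q c lam u a <= r%:E - \sum_(v in par Q u) fconj Q c lam v (- Q u v * a))%E.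
Proof.
rewrite lee_swapBr (eq_bigr _ (fun v _ => fconj_feasible v _)) -big_enum /=.
apply: (ereal_sup_sum_le (fun=> 0, fun=> true)) => [|v _|w fw].
- exact: enum_uniq.
- by exists (fun=> 0, fun=> true) => i _; rewrite mul0r.
have fw' v : v \in par Q u -> feasible v (w v).1 (w v).2 by rewrite -mem_enum; apply: fw.
have [x [z [fx xu zu xzw]]] := feasible_glue a fw'.
have Ecost : subtree_cost u x z = r - \sum_(v in par Q u) cost_gain v (- Q u v * a) (w v).
  rewrite subtree_cost_rec xu zu -sumrN; congr (_ + _); apply: eq_bigr => v vu.
  have [xv _] := xzw v v vu (in_subtree_refl v).
  by rewrite /cost_gain (subtree_cost_ext (fun i => xzw v i vu)) xv; ring.
rewrite big_enum /= lee_swapBr sumEFin -EFinB.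
by rewrite -Ecost -xu fcost_le_cost.
Qed.

Hypothesis lam_gt0 : forall i, 0 < lam i.

Lemma rec_le_fcost :
  (r%:E - \sum_(v in par Q u) fconj Q c lam v (- Q u v * a) <= fcost Q c lam u a)%E.
Proof.
apply: le_fcost => x z fx xu.
have gain_le : (\sum_(v in par Q u) (cost_gain v (- Q u v * a) (x, z))%:E
    <= \sum_(v in par Q u) fconj Q c lam v (- Q u v * a))%E.
  apply: lee_sum => v vu; rewrite fconj_feasible; apply: ereal_sup_ubound.
  by exists (x, z) => //; apply: feasible_par vu fx.
apply: le_trans (leeB (lexx _) gain_le) _.
have ind_le : lam u * ind a <= lam u * (z u)%:R.
  rewrite ler_pM2l // /ind; case: eqVneq => [_|a0]; first by rewrite ler_nat.
  have := fx u (in_subtree_refl u); rewrite xu; case: (z u) => //=.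
  by rewrite subr0 mulr1 => /eqP; rewrite (negbTE a0).
rewrite sumEFin -EFinB lee_fin subtree_cost_rec xu -sumrN.
rewrite (eq_bigr (fun v => Q u v * a * x v + subtree_cost v x z)) => [|v _]; last first.
  by rewrite /cost_gain /=; ring.
lra.
Qed.

End Recursion.
End SubtreeCost.
End SupportTree.

Unset Implicit Arguments.

Theorem mainTheorem3 (R : realType) (m : nat) (Q : 'M[R]_m.+1)
  (c lam : 'I_m.+1 -> R) :
  Q^T = Q -> posdef Q -> (forall i, Q i i = 1) ->
  is_tree Q -> topo_labeling Q ->
  (forall i, 0 < lam i) ->
  forall (u : 'I_m.+1) (a : R),
    fcost Q c lam u a =
    ((2^-1 * Q u u * a ^+ 2 + c u * a + lam u * ind a)%:E
     - \sum_(v in par Q u) fconj Q c lam v (- Q u v * a))%E.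
Proof.
move=> Q_sym _ _ Q_tree _ lam_gt0 u a; apply/eqP; rewrite eq_le.
by rewrite fcost_le_rec // rec_le_fcost.
Qed.
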